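(* Fix $d\ge2$. There exists $C>0$ such that for all $n\ge1$, $$\mathrm{card}\,\mathrm{Diag}(n)\le C n^{d-1}.$$
   Context: Consider the tessellation of $\mathbb{R}^d$ by the unit cubes $k+[0,1]^d$, $k\in\mathbb{Z}^d$; faces are faces of these cubes. For faces $A,B$ of dimension at most $d-2$, the diagonal $\gamma_{A,B}$ is the set of oriented segments starting in $A$ and ending in $B$ (not meeting other faces of dimension at most $d-2$ in between); $A,B$ are at combinatorial length $n$ if every such segment passes through $n$ cubes, and then $\gamma_{A,B}$ has combinatorial length $n$. $\mathrm{Diag}(n)$ is the set of diagonals of combinatorial length $n$ whose initial segment lies in $[0,1]^d$. *)

From HB Require Import structures.
From mathcomp Require Import all_boot all_order all_algebra.
From mathcomp Require Import reals.
Set Implicit Arguments. Unset Strict Implicit. Unset Printing Implicit Defensive.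
Import Order.TTheory GRing.Theory Num.Theory.
Local Open Scope ring_scope.

(* Its dimension
   is #|I|.  Every face of every cube k + [0,1]^d is of this form and
   conversely. *)
Definition in_face (R : realType) (d : nat) (I : {set 'I_d}) (k : 'I_d -> int)
  (x : 'I_d -> R) : Prop :=
  forall i, if i \in I then (k i)%:~R <= x i <= (k i)%:~R + 1
            else x i == (k i)%:~R.

Definition in_cube (R : realType) (d : nat) (k : {ffun 'I_d -> int})
  (x : 'I_d -> R) : Prop :=
  forall i, (k i)%:~R <= x i <= (k i)%:~R + 1.

Definition skel (R : realType) (d : nat) (x : 'I_d -> R) : Prop :=
  exists (I : {set 'I_d}) (k : 'I_d -> int), (#|I| <= d - 2)%N /\ in_face I k x.

Definition segpt (R : realType) (d : nat) (p q : 'I_d -> R) (t : R) : 'I_d -> R :=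
  fun i => p i + t * (q i - p i).

Definition seg (R : realType) (d : nat) := (('I_d -> R) * ('I_d -> R))%type.

Definition gamma (R : realType) (d : nat) (IA : {set 'I_d}) (kA : 'I_d -> int)
  (IB : {set 'I_d}) (kB : 'I_d -> int) : seg R d -> Prop :=
  fun s => s.1 <> s.2 /\ in_face IA kA s.1 /\ in_face IB kB s.2 /\
    forall t : R, 0 < t < 1 -> ~ skel (segpt s.1 s.2 t).

Definition passes (R : realType) (d : nat) (p q : 'I_d -> R) (k : {ffun 'I_d -> int})
  : Prop :=
  exists t1 t2 : R, 0 <= t1 /\ t1 < t2 /\ t2 <= 1 /\
    in_cube k (segpt p q t1) /\ in_cube k (segpt p q t2).

Definition passes_n (R : realType) (d : nat) (p q : 'I_d -> R) (n : nat) : Prop :=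
  exists s : seq {ffun 'I_d -> int},
    uniq s /\ size s = n /\ forall k, k \in s <-> passes p q k.

Definition comb_length (R : realType) (d : nat) (IA : {set 'I_d}) (kA : 'I_d -> int)
  (IB : {set 'I_d}) (kB : 'I_d -> int) (n : nat) : Prop :=
  forall s, @gamma R d IA kA IB kB s -> passes_n s.1 s.2 n.

Definition initial_in_unit (R : realType) (d : nat) (p q : 'I_d -> R) : Prop :=
  exists eps : R, 0 < eps /\
    forall t, 0 <= t <= eps -> forall i, 0 <= segpt p q t i <= 1.

Definition Diag (R : realType) (d : nat) (n : nat) (g : seg R d -> Prop) : Prop :=
  exists (IA : {set 'I_d}) (kA : 'I_d -> int) (IB : {set 'I_d}) (kB : 'I_d -> int),
    (#|IA| <= d - 2)%N /\ (#|IB| <= d - 2)%N /\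
    g = @gamma R d IA kA IB kB /\
    (exists s, g s) /\
    @comb_length R d IA kA IB kB n /\
    (forall s, g s -> initial_in_unit s.1 s.2).

From mathcomp Require Import all_boot all_order all_algebra.
From mathcomp Require Import reals boolp.
From Stdlib Require List.
From mathcomp Require Import ring lra zify.
Set Implicit Arguments. Unset Strict Implicit. Unset Printing Implicit Defensive.
Import Order.TTheory GRing.Theory Num.Theory.
Local Open Scope ring_scope.

(* Negate the coordinates that decrease along a segment from p to q, so that every
   coordinate u_i(t) of its point at time t is nondecreasing, with slope |q_i - p_i|.
   The cube met at time t has lower corner given by the floors of the u_i(t), and its
   level, the sum of these floors, is nondecreasing in t.  When the open segment
   avoids the (d-2)-skeleton, no two coordinates are integers at the same time, so
   the level goes up by one at each change of cube and distinct cubes met have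
   distinct levels.  Hence the number n of cubes met is the l1-length of q - p up to
   O(d), unless some coordinate stays constant at an integer, and then every slope is
   at most 1.  As p lies in [0,1]^d, the start face has its integer vector in
   {-1,0,1}^d, and the end face one of l1-norm n + O(d) or O(d); there are
   O(n^(d-1)) such pairs of faces. *)

Lemma sumr_near (R : numDomainType) d (x y : 'I_d -> R) :
  (forall i, x i - 1 <= y i <= x i + 1) ->
  \sum_i x i - d%:R <= \sum_i y i <= \sum_i x i + d%:R.
Proof.
move=> near; have -> : d%:R = \sum_(i < d) (1 : R) by rewrite sumr_const card_ord.
rewrite -sumrB -big_split /=.
by apply/andP; split; apply: ler_sum => i _; case/andP: (near i).
Qed.

Section Straightening.
Variables (R : realType) (d : nat) (p q : 'I_d -> R).

Definition ascending i : bool := 0 <= q i - p i.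

Definition ucoord i t : R := if ascending i then segpt p q t i else - segpt p q t i.

Definition slope i : R := `|q i - p i|.

Lemma slope_ge0 i : 0 <= slope i.
Proof. exact: normr_ge0. Qed.

Lemma ucoordE i t : ucoord i t = ucoord i 0 + t * slope i.
Proof.
rewrite /ucoord /slope /segpt /ascending; case: ifP => h.
  by rewrite (ger0_norm h); ring.
by rewrite ltr0_norm ?ltNge ?h //; ring.
Qed.

Lemma floor_ucoord_le i t t' : t <= t' -> Num.floor (ucoord i t) <= Num.floor (ucoord i t').
Proof.
by move=> le_tt'; rewrite le_floor // (ucoordE i t) (ucoordE i t') lerD2l ler_wpM2r ?slope_ge0.
Qed.

Definition ucube (k : {ffun 'I_d -> int}) i : int :=
  if ascending i then k i else - k i - 1.

Lemma ucube_inj k k' : ucube k =1 ucube k' -> k = k'.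
Proof.
move=> e; apply/ffunP => i; have := e i; rewrite /ucube.
by case: ascending => // /addIr /oppr_inj.
Qed.

Lemma in_cube_segptE k t : in_cube k (segpt p q t) <->
  forall i, (ucube k i)%:~R <= ucoord i t <= (ucube k i)%:~R + 1.
Proof.
rewrite /in_cube /ucube /ucoord; split=> cube i; have := cube i;
  case: ascending => // /andP[h1 h2]; apply/andP;
  rewrite ?intrB ?intrN ?mulr1z in h1 h2 *; split; lra.
Qed.

Definition cube_at t : {ffun 'I_d -> int} :=
  [ffun i => if ascending i then Num.floor (ucoord i t) else - Num.floor (ucoord i t) - 1].

Lemma ucube_at t i : ucube (cube_at t) i = Num.floor (ucoord i t).
Proof. by rewrite /ucube ffunE; case: ascending => //; lia. Qed.

Definition level (k : {ffun 'I_d -> int}) : int := \sum_i ucube k i.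

Lemma level_cube_at t : level (cube_at t) = \sum_i Num.floor (ucoord i t).
Proof. by apply: eq_bigr => i _; rewrite ucube_at. Qed.

Lemma level_cube_at_le t t' : t <= t' -> level (cube_at t) <= level (cube_at t').
Proof. by move=> le_tt'; rewrite !level_cube_at ler_sum // => i _; apply: floor_ucoord_le. Qed.

Lemma cube_at_inj t t' : level (cube_at t) = level (cube_at t') -> cube_at t = cube_at t'.
Proof.
wlog le_tt' : t t' / t <= t' => [hwlog e|e].
  by case: (leP t t') => [/hwlog|/ltW/hwlog h]; [apply | apply/esym/h/esym].
apply: ucube_inj => i; rewrite !ucube_at; apply/eqP; rewrite eq_le floor_ucoord_le //=.
have /psumr_eq0P : \sum_(j < d) (Num.floor (ucoord j t') - Num.floor (ucoord j t)) = 0.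
  by rewrite sumrB -!level_cube_at e subrr.
move=> /(_ _ i isT)/subr0_eq -> //.
by move=> j _; rewrite subr_ge0 floor_ucoord_le.
Qed.

(* The value [2], beyond the time interval [0, 1], means never. *)
Definition next_hit i t : R :=
  if 0 < slope i then t + ((Num.floor (ucoord i t) + 1)%:~R - ucoord i t) / slope i else 2.

Lemma next_hit_gt i t : t < 1 -> t < next_hit i t.
Proof.
move=> lt_t1; rewrite /next_hit; case: ifP => [slope_gt0|_]; last lra.
by rewrite ltrDl divr_gt0 // subr_gt0 floorD1_gt.
Qed.

Lemma ucoord_next_hit i t : 0 < slope i ->
  ucoord i (next_hit i t) = (Num.floor (ucoord i t) + 1)%:~R.
Proof.
move=> slope_gt0; rewrite /next_hit slope_gt0 ucoordE mulrDl -mulrA mulVf ?gt_eqF //.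
by rewrite [ucoord i t]ucoordE; ring.
Qed.

Lemma ucoord_before_next_hit i t t' : t <= t' -> t' <= next_hit i t ->
  (Num.floor (ucoord i t))%:~R <= ucoord i t' <= (Num.floor (ucoord i t))%:~R + 1.
Proof.
move=> le_tt' le_t'next.
have lo := floor_le (ucoord i t); have hi := floorD1_gt (ucoord i t).
rewrite intrD mulr1z in hi.
have e := ucoordE i t; have e' := ucoordE i t'.
have step : t * slope i <= t' * slope i by rewrite ler_wpM2r ?slope_ge0.
have [slope_gt0|slope_le0] := ltP 0 (slope i).
  have := ucoord_next_hit t slope_gt0; rewrite ucoordE intrD mulr1z => e''.
  have : t' * slope i <= next_hit i t * slope i by rewrite ler_wpM2r ?slope_ge0.
  move=> *; apply/andP; split; lra.
have slope0 : slope i = 0 by apply/le_anti; rewrite slope_le0 slope_ge0.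
rewrite slope0 !mulr0 !addr0 in e e'; apply/andP; split; lra.
Qed.

Definition next_event t : R := \big[Order.min/1]_i next_hit i t.

Lemma next_event_attained t : next_event t < 1 -> exists i, next_event t = next_hit i t.
Proof.
rewrite /next_event; elim/big_rec: _ => [|i x _ IH]; first by rewrite ltxx.
by rewrite /Order.min; case: ifP => // _ _; exists i.
Qed.

Lemma next_event_le1 t : next_event t <= 1.
Proof. exact: bigmin_le_id. Qed.

Lemma next_event_le i t : next_event t <= next_hit i t.
Proof. exact: bigmin_le. Qed.

Lemma next_event_gt t : t < 1 -> t < next_event t.
Proof. by move=> lt_t1; apply/bigmin_gtP; split=> // i _; apply: next_hit_gt. Qed.

Lemma ucoord_before_next_event i t t' : t <= t' -> t' <= next_event t ->
  (Num.floor (ucoord i t))%:~R <= ucoord i t' <= (Num.floor (ucoord i t))%:~R + 1.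
Proof.
by move=> le_tt' le_t'ev; apply: ucoord_before_next_hit (le_trans le_t'ev (next_event_le i t)).
Qed.

Lemma passes_cube_at t : 0 <= t < 1 -> passes p q (cube_at t).
Proof.
move=> /andP[t_ge0 lt_t1]; have lt_tev := next_event_gt lt_t1.
exists t, (next_event t); do 3!split => //; first exact: next_event_le1.
by split; apply/in_cube_segptE => i; rewrite ucube_at;
  apply: ucoord_before_next_event => //; apply: ltW.
Qed.

Hypothesis no_two_integral : forall t, 0 < t < 1 -> forall i j, i != j ->
  forall mi mj : int, ucoord i t = mi%:~R -> ucoord j t <> mj%:~R.

Lemma level_next_event t : 0 <= t < 1 -> next_event t < 1 ->
  level (cube_at (next_event t)) = level (cube_at t) + 1.
Proof.
move=> /andP[t_ge0 lt_t1] lt_ev1; have lt_tev := next_event_gt lt_t1.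
have [im def_ev] := next_event_attained lt_ev1.
have slope_gt0 : 0 < slope im.
  by move: lt_ev1; rewrite def_ev /next_hit; case: ifP => // _; lra.
have hit : ucoord im (next_event t) = (Num.floor (ucoord im t) + 1)%:~R.
  by rewrite def_ev ucoord_next_hit.
rewrite !level_cube_at (bigD1 im) //= [in RHS](bigD1 im) //= hit intrKfloor addrAC.
congr (_ + _ + _); apply: eq_bigr => j ne_jim; apply: floor_def.
have /andP[-> le_up] := ucoord_before_next_event j (ltW lt_tev) (lexx _).
rewrite /= intrD mulr1z lt_neqAle le_up andbT; apply/eqP => hit_j.
apply: (@no_two_integral (next_event t) _ im j _ _ (Num.floor (ucoord j t) + 1) hit).
- by apply/andP; split; lra.
- by rewrite eq_sym.
- by rewrite hit_j intrD mulr1z.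
Qed.

Lemma level_end_le t : 0 <= t < 1 -> 1 <= next_event t ->
  level (cube_at 1) <= level (cube_at t) + d%:Z.
Proof.
move=> /andP[_ lt_t1] le1ev.
have -> : d%:Z = \sum_(i < d) 1 by rewrite sumr_const card_ord natz.
rewrite !level_cube_at -big_split.
apply: ler_sum => i _; rewrite -[X in _ <= X](@intrKfloor R) intrD mulr1z; apply: le_floor.
by case/andP: (ucoord_before_next_event i (ltW lt_t1) le1ev).
Qed.

Lemma level_reach (j : nat) : level (cube_at 0) + j%:Z + d%:Z <= level (cube_at 1) ->
  exists2 t, 0 <= t < 1 & level (cube_at t) = level (cube_at 0) + j%:Z.
Proof.
elim: j => [|j IH] le_end; first by exists 0; rewrite ?addr0 // lexx ltr01.
have [|t t01 e] := IH; first lia.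
have [lt_ev1|/(level_end_le t01)] := ltP (next_event t) 1; last lia.
exists (next_event t); last by rewrite level_next_event // e; lia.
by case/andP: t01 => t_ge0 /next_event_gt lt_tev; rewrite lt_ev1 andbT; lra.
Qed.

Lemma passes_n_ge n : passes_n p q n ->
  level (cube_at 1) - level (cube_at 0) - d%:Z + 1 <= n%:Z.
Proof.
move=> [s [_ [<- mem_s]]].
have [|/gez0_abs eJ] := ltP (level (cube_at 1) - level (cube_at 0) - d%:Z) 0; first lia.
set J := `|_|%N in eJ; rewrite -eJ.
have : (size [seq (level (cube_at 0) + j%:Z)%R | j <- iota 0 J.+1] <= size (map level s))%N.
  apply: uniq_leq_size => [|v /mapP[j]].
    by rewrite map_inj_uniq ?iota_uniq // => ? ? /addrI [].
  rewrite mem_iota add0n => lt_jJ ->.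
  have [|t t01 <-] := @level_reach j; first lia.
  by apply: map_f; apply/mem_s/passes_cube_at.
by rewrite !size_map size_iota; lia.
Qed.

Lemma slope_le1_of_flat_integral i1 (m : int) :
  slope i1 = 0 -> ucoord i1 0 = m%:~R -> forall j, slope j <= 1.
Proof.
move=> flat1 int1 j; have [->|ne_ji1] := eqVneq j i1; first by rewrite flat1 ler01.
rewrite leNgt; apply/negP => slope_gt1; have slope_gt0 : 0 < slope j by lra.
apply: (@no_two_integral (next_hit j 0) _ j i1 ne_ji1 _ m (ucoord_next_hit 0 slope_gt0)).
  rewrite next_hit_gt ?ltr01 //= /next_hit slope_gt0 add0r ltr_pdivrMr // mul1r.
  by have := floor_le (ucoord j 0); rewrite intrD mulr1z; lra.
by rewrite ucoordE flat1 mulr0 addr0.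
Qed.

Lemma level_gap_near_slope_sum :
  \sum_i slope i - d%:R <= (level (cube_at 1) - level (cube_at 0))%:~R <=
  \sum_i slope i + d%:R.
Proof.
rewrite !level_cube_at -sumrB mulrz_sumr; apply: sumr_near => i.
have := floor_le (ucoord i 1); have := floorD1_gt (ucoord i 1).
have := floor_le (ucoord i 0); have := floorD1_gt (ucoord i 0).
rewrite (ucoordE i 1) mul1r intrB !intrD !mulr1z => *; apply/andP; split; lra.
Qed.

Hypothesis no_flat_integral : forall i, slope i = 0 -> forall m : int, ucoord i 0 <> m%:~R.

Lemma passes_cube_at_mid k : passes p q k -> exists2 t, 0 < t < 1 & k = cube_at t.
Proof.
move=> [t1 [t2 [t1_ge0 [lt_t12 [t2_le1 [/in_cube_segptE c1 /in_cube_segptE c2]]]]]].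
exists ((t1 + t2) / 2); first by apply/andP; split; lra.
apply: ucube_inj => i; rewrite ucube_at; apply/esym/floor_def.
have /andP[lo1 up1] := c1 i; have /andP[lo2 up2] := c2 i; rewrite intrD mulr1z.
have e1 := ucoordE i t1; have e2 := ucoordE i t2; have e := ucoordE i ((t1 + t2) / 2).
have mid : (t1 + t2) / 2 * slope i = (t1 * slope i + t2 * slope i) / 2 by ring.
have [slope_gt0|slope_le0] := ltP 0 (slope i).
  have : t1 * slope i < t2 * slope i by rewrite ltr_pM2r.
  by move=> *; apply/andP; split; lra.
have flat : slope i = 0 by apply/le_anti; rewrite slope_le0 slope_ge0.
rewrite flat !mulr0 !addr0 in e1 e2 e; rewrite e -e1 lo1 /= lt_neqAle up1 andbT.
apply/eqP => top; apply: (no_flat_integral flat (m := ucube k i + 1)).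
by rewrite -e1 top intrD mulr1z.
Qed.

Lemma passes_n_le n : passes_n p q n ->
  n%:Z <= level (cube_at 1) - level (cube_at 0) + 1.
Proof.
move=> [s [uniq_s [<- mem_s]]].
have /gez0_abs eJ : 0 <= level (cube_at 1) - level (cube_at 0).
  by rewrite subr_ge0 level_cube_at_le ?ler01.
set J := `|_|%N in eJ; rewrite -eJ.
have : (size (map level s) <= size [seq (level (cube_at 0) + j%:Z)%R | j <- iota 0 J.+1])%N.
  apply: uniq_leq_size => [|v /mapP[k /mem_s/passes_cube_at_mid[t /andP[t_gt0 lt_t1] ->] ->]].
    rewrite map_inj_in_uniq // => k k'.
    move=> /mem_s/passes_cube_at_mid[t _ ->] /mem_s/passes_cube_at_mid[t' _ ->].
    exact: cube_at_inj.
  have := level_cube_at_le (ltW t_gt0); have := level_cube_at_le (ltW lt_t1).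
  move=> le_t1 le_0t; have /gez0_abs et : 0 <= level (cube_at t) - level (cube_at 0).
    by rewrite subr_ge0.
  apply/mapP; exists `|level (cube_at t) - level (cube_at 0)|%N; last by lia.
  by rewrite mem_iota add0n leq0n /= ltnS -lez_nat et eJ lerD2r.
by rewrite !size_map size_iota; lia.
Qed.

End Straightening.

Lemma skel_of_two_integral (R : realType) d (x : 'I_d -> R) i j (mi mj : int) :
  i != j -> x i = mi%:~R -> x j = mj%:~R -> skel x.
Proof.
move=> ne_ij xi xj.
exists (~: [set i; j]),
  (fun l => if l == i then mi else if l == j then mj else Num.floor (x l)).
split.
  have := cardsC [set i; j]; rewrite cards2 ne_ij card_ord.
  by set c := #|~: _|; lia.
move=> l; rewrite !inE.
have [->|_] /= := eqVneq l i; first by rewrite xi.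
have [->|_] /= := eqVneq l j; first by rewrite xj.
by rewrite floor_le /= ltW // -[1]/(1%:~R) -intrD floorD1_gt.
Qed.

Lemma no_two_integral_of_skel_free (R : realType) d (p q : 'I_d -> R) :
  (forall t, 0 < t < 1 -> ~ skel (segpt p q t)) ->
  forall t, 0 < t < 1 -> forall i j, i != j ->
  forall mi mj : int, ucoord p q i t = mi%:~R -> ucoord p q j t <> mj%:~R.
Proof.
have segpt_int i t (m : int) : ucoord p q i t = m%:~R ->
    segpt p q t i = (if ascending p q i then m else - m)%:~R.
  by rewrite /ucoord; case: ascending => // e; rewrite intrN -e opprK.
move=> free t t01 i j ne_ij mi mj /segpt_int xi /segpt_int xj.
exact: free t t01 (skel_of_two_integral ne_ij xi xj).
Qed.

Section DiagonalFaces.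
Variables (R : realType) (d : nat).

Lemma in_face_cube (I : {set 'I_d}) k (x : 'I_d -> R) :
  in_face I k x -> forall i, (k i)%:~R <= x i <= (k i)%:~R + 1.
Proof.
by move=> fx i; have := fx i; case: (i \in I) => // /eqP ->; rewrite lexx lerDl ler01.
Qed.

Lemma start_face_bounded (I : {set 'I_d}) k (x : 'I_d -> R) :
  in_face I k x -> (forall i, 0 <= x i <= 1) -> forall i, -1 <= k i <= 1.
Proof.
move=> fx x01 i; have /andP[? ?] := in_face_cube fx i; have /andP[? ?] := x01 i.
by rewrite -!(ler_int R) mulrN1z; apply/andP; split; lra.
Qed.

Lemma end_face_norm_near (I : {set 'I_d}) k (p q : 'I_d -> R) :
  (forall i, 0 <= p i <= 1) -> in_face I k q ->
  \sum_i slope p q i - d%:R <= (\sum_i `|k i|)%:~R <= \sum_i slope p q i + d%:R.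
Proof.
move=> p01 fq; rewrite mulrz_sumr; apply: sumr_near => i.
have /andP[? ?] := p01 i; have /andP[? ?] := in_face_cube fq i.
have : `|(q i - p i) - (k i)%:~R| <= 1 by rewrite ler_norml; apply/andP; split; lra.
move/(le_trans (ler_dist_dist _ _)); rewrite ler_norml intr_norm /slope.
by move=> /andP[? ?]; apply/andP; split; lra.
Qed.

Lemma slope_sum_dichotomy (p q : 'I_d -> R) n :
  (forall t, 0 < t < 1 -> ~ skel (segpt p q t)) -> passes_n p q n ->
  \sum_i slope p q i <= d%:R \/
  n%:R - d%:R - 1 <= \sum_i slope p q i <= n%:R + 2 * d%:R.
Proof.
move=> /no_two_integral_of_skel_free no_two pn.
have [[i1 [flat [m int1]]]|no_flat] :=
  pselect (exists i, slope p q i = 0 /\ exists m : int, ucoord p q i 0 = m%:~R).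
  left; have -> : d%:R = \sum_(i < d) (1 : R) by rewrite sumr_const card_ord.
  by apply: ler_sum => i _; exact: (slope_le1_of_flat_integral no_two flat int1 i).
right; have {}no_flat i : slope p q i = 0 -> forall m : int, ucoord p q i 0 <> m%:~R.
  by move=> flat m int_i; apply: no_flat; exists i; split => //; exists m.
move: (passes_n_ge no_two pn) (passes_n_le no_flat pn) (level_gap_near_slope_sum p q).
set G := level _ _ _ - level _ _ _.
rewrite -!(ler_int R) !intrD !intrN !pmulrn !mulr1z.
by move=> *; apply/andP; split; lra.
Qed.

Lemma Diag_faces n g : Diag n g ->
  exists IA kA IB kB, g = @gamma R d IA kA IB kB /\ (forall i, -1 <= kA i <= 1) /\
    (\sum_i `|kB i| <= (2 * d)%:Z \/
     n%:Z - (2 * d).+1%:Z <= \sum_i `|kB i| <= n%:Z + (3 * d)%:Z).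
Proof.
move=> [IA [kA [IB [kB [_ [_ [-> [[[p q] gs] [len init]]]]]]]]].
have [_ [fp [fq free]]] := gs.
have p01 i : 0 <= p i <= 1.
  have [eps [eps_gt0 near_p]] := init _ gs.
  by have := near_p 0 _ i; rewrite /segpt mul0r addr0; apply; rewrite lexx ltW.
exists IA, kA, IB, kB; split=> //; split; first exact: start_face_bounded fp p01.
have /andP[Klo Khi] := end_face_norm_near p01 fq.
have [small|/andP[lo hi]] := slope_sum_dichotomy free (len _ gs); [left|right].
  by rewrite -(ler_int R) -pmulrn natrM; lra.
rewrite -!(ler_int R) !intrD !intrN -!pmulrn mulrSr !natrM.
by apply/andP; split; lra.
Qed.

End DiagonalFaces.

Definition centered M (x : 'I_(2 * M).+1) : int := x%:Z - M%:Z.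

Definition center M (z : int) : 'I_(2 * M).+1 := inord (absz (z + M%:Z)).

Lemma centerK M z : `|z| <= M%:Z -> centered (center M z) = z.
Proof.
rewrite ler_norml => /andP[? ?]; have ? : 0 <= z + M%:Z by lia.
by rewrite /centered /center inordK ?gez0_abs ?addrK // -ltz_nat gez0_abs; lia.
Qed.

(* A pair of faces: the two face directions, the start vector (each entry in
   [-1, 1]), whether the l1-norm of the end vector lies near [n] or near [0],
   its offset in that window, the sign of the last entry of the end vector,
   and its other entries (in [-M, M]); the norm then determines the last entry. *)
Definition face_code d' M := ({set 'I_d'.+1} * {ffun 'I_d'.+1 -> 'I_(2 * 1).+1} *
  {set 'I_d'.+1} * bool * 'I_(5 * d'.+1).+2 * bool * {ffun 'I_d' -> 'I_(2 * M).+1})%type.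

Definition window_start d' n (far : bool) : int := if far then n%:Z - (2 * d'.+1).+1%:Z else 0.

Definition diagonal_of_code (R : realType) d' n M (c : face_code d' M) : seg R d'.+1 -> Prop :=
  let '(IA, kA, IB, far, w, pos, kB) := c in
  let last := window_start d' n far + w%:Z - \sum_j `|centered (kB j)| in
  gamma IA (fun i => centered (kA i))
    IB (fun i => if unlift ord_max i is Some j then centered (kB j)
                 else if pos then last else - last).

Lemma sum_lift_ord_max n (F : 'I_n.+1 -> int) :
  \sum_i F i = \sum_(j < n) F (lift ord_max j) + F ord_max.
Proof.
rewrite big_ord_recr /=; congr (_ + _); apply: eq_bigr => j _.
by congr F; apply/val_inj/esym/lift_max.
Qed.

Lemma diagonal_of_code_surj (R : realType) d' n (IA IB : {set 'I_d'.+1})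
    (kA kB : 'I_d'.+1 -> int) :
  (forall i, -1 <= kA i <= 1) ->
  (\sum_i `|kB i| <= (2 * d'.+1)%:Z \/
   n%:Z - (2 * d'.+1).+1%:Z <= \sum_i `|kB i| <= n%:Z + (3 * d'.+1)%:Z) ->
  exists c : face_code d' (n + 3 * d'.+1), diagonal_of_code (R := R) n c = gamma IA kA IB kB.
Proof.
set D := d'.+1; set M := (n + 3 * D)%N; set K := \sum_i `|kB i| => kA_small K_near.
have K_ge0 : 0 <= K by apply: sumr_ge0.
have kB_le_M i : `|kB i| <= M%:Z.
  apply: le_trans (_ : K <= _); last by case: K_near; lia.
  by rewrite /K (bigD1 i) //= lerDl sumr_ge0.
set far := ~~ (K <= (2 * D)%:Z).
have w_range : 0 <= K - window_start d' n far <= (5 * D).+1%:Z.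
  by rewrite /window_start /far; case: K_near => ?; case: ifP => /=; lia.
exists (IA, [ffun i => center 1 (kA i)], IB, far, inord (absz (K - window_start d' n far)),
  0 <= kB ord_max, [ffun j => center M (kB (lift ord_max j))]) => /=.
congr gamma; apply: funext => i; first by rewrite ffunE centerK // ler_norml.
case: unliftP => [j|] ->; first by rewrite ffunE centerK.
rewrite inordK; last by lia.
rewrite gez0_abs; last by lia.
rewrite (eq_bigr (fun j => `|kB (lift ord_max j)|)) => [|j _]; last by rewrite ffunE centerK.
rewrite (addrC (window_start _ _ _)) subrK /K sum_lift_ord_max addrC addKr.
by case: (leP 0 (kB ord_max)) => [/ger0_norm|/ltr0_norm] ->; rewrite ?opprK.
Qed.

Lemma card_face_code d' M :
  #|{: face_code d' M}| = (#|{: face_code d' 0}| * (2 * M).+1 ^ d')%N.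
Proof. by rewrite /face_code !card_prod !card_ffun !card_ord muln0 exp1n !muln1. Qed.

Lemma card_face_code0_gt0 d' : (0 < #|{: face_code d' 0}|)%N.
Proof.
by apply/card_gt0P; exists (set0, [ffun=> ord0], set0, false, ord0, false, [ffun=> ord0]).
Qed.

Lemma leq_expn2r e m n : (m <= n)%N -> (m ^ e <= n ^ e)%N.
Proof. by case: e => // e; rewrite leq_exp2r. Qed.

Lemma mem_In_map (T : eqType) U (f : T -> U) (s : seq T) x :
  x \in s -> List.In (f x) (map f s).
Proof. by elim: s => //= y s IH; rewrite inE => /predU1P[->|/IH]; [left|right]. Qed.

Unset Implicit Arguments.

Theorem mainTheorem13 (R : realType) (d : nat) (hd : (2 <= d)%N) :
  exists C : R, 0 < C /\
    forall n : nat, (1 <= n)%N ->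
      exists l : seq (seg R d -> Prop),
        (size l)%:R <= C * n%:R ^+ (d - 1) /\
        forall g, @Diag R d n g -> List.In g l.
Proof.
case: d hd => [//|d'] _; set c0 := #|{: face_code d' 0}|.
exists (c0 * (6 * d'.+1 + 3) ^ d')%:R; split.
  by rewrite ltr0n muln_gt0 card_face_code0_gt0 expn_gt0 addn3.
move=> n n_gt0; exists [seq diagonal_of_code n c | c <- enum {: face_code d' (n + 3 * d'.+1)}].
split.
  rewrite size_map -cardE card_face_code subn1 -natrX -natrM ler_nat -mulnA -expnMn.
  by rewrite leq_mul2l leq_expn2r ?orbT //; nia.
move=> g /Diag_faces[IA [kA [IB [kB [-> [kA_small kB_norm]]]]]].
have [c <-] := diagonal_of_code_surj R IA IB kA_small kB_norm.
by apply: mem_In_map; rewrite mem_enum.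
Qed.
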